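(* Let $\mathcal{P}(\mathbb{R}^d)$ denote the set of probability measures on $\mathbb{R}^d$ that are absolutely continuous with respect to Lebesgue measure and admit smooth densities. Let $p=\tilde p/\mathcal{Z}\in\mathcal{P}(\mathbb{R}^d)$ be a target density with $\tilde p:\mathbb{R}^d\to\mathbb{R}_{\ge0}$ continuous and $\mathcal{Z}=\int\tilde p(x)\,\mathrm{d}x$. Fix $\varepsilon_{\text{tr}}>0$, $\varepsilon_{\text{ent}}>0$ and $q_0\in\mathcal{P}(\mathbb{R}^d)$, and for $i\in\mathbb{N}$ consider the iterative scheme $$q_{i+1}=\operatorname*{arg\,min}_{q\in\mathcal{P}(\mathbb{R}^d)} D_{\mathrm{KL}}(q\,\|\,p)\quad\text{s.t.}\quad D_{\mathrm{KL}}(q\,\|\,q_i)\le\varepsilon_{\text{tr}},\quad H(q_i)-H(q)\le\varepsilon_{\text{ent}}$$ (together with the normalization constraint $\int q(x)\,\mathrm{d}x=1$), treated via a Lagrangian with multipliers $\lambda\ge0$ (trust-region constraint) and $\eta\ge0$ (entropy constraint). Then the intermediate optimal densities solving this problem satisfy $$q_{i+1}(x,\lambda,\eta)=\frac{q_i(x)^{\frac{\lambda}{1+\lambda+\eta}}\,\tilde p(x)^{\frac{1}{1+\lambda+\eta}}}{\mathcal{Z}_{i+1}(\lambda,\eta)},\qquad \mathcal{Z}_{i+1}(\lambda,\eta)=\int q_i(x)^{\frac{\lambda}{1+\lambda+\eta}}\,\tilde p(x)^{\frac{1}{1+\lambda+\eta}}\,\mathrm{d}x,$$ where $q_{i+1}$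 are the unique optima of the Lagrangian corresponding to this problem.
   Context: $D_{\mathrm{KL}}(q\|r)=\int q(x)\log\frac{q(x)}{r(x)}\,\mathrm{d}x$ is the Kullback–Leibler divergence and $H(q)=-\int q(x)\log q(x)\,\mathrm{d}x$ the Shannon entropy. The Lagrangian is $D_{\mathrm{KL}}(q\|p)+\lambda\big(D_{\mathrm{KL}}(q\|q_i)-\varepsilon_{\text{tr}}\big)+\eta\big(H(q_i)-H(q)-\varepsilon_{\text{ent}}\big)$. *)

(* R^d is modelled as d.-tuple R with the product
   (coordinate-generated) sigma-algebra of the Borel sets of R. *)
From HB Require Import structures.
From mathcomp Require Import all_boot all_order all_algebra.
From mathcomp Require Import all_classical all_reals all_analysis.
Set Implicit Arguments.
Unset Strict Implicit.
Unset Printing Implicit Defensive.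
Import Order.TTheory GRing.Theory Num.Theory.
Import numFieldNormedType.Exports.
Local Open Scope classical_set_scope.
Local Open Scope ring_scope.

Section Defs.
Variables (R : realType) (d : nat).
Local Notation Rd := (d.-tuple R).

Definition is_lebesgue_measure (mu : {measure set Rd -> \bar R}) : Prop :=
  forall a b : Rd, (forall i, tnth a i <= tnth b i) ->
    mu [set x : Rd | forall i, tnth a i <= tnth x i <= tnth b i] =
    (\prod_(i < d) (tnth b i - tnth a i))%:E.

Definition tuple_continuous (f : Rd -> R) : Prop :=
  forall x : Rd, forall e : R, 0 < e -> exists2 del : R, 0 < del &
    forall y : Rd, (forall i, `|tnth y i - tnth x i| < del) -> `|f y - f x| < e.

Variable mu : {measure set Rd -> \bar R}.

Definition is_density (q : Rd -> R) : Prop :=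
  [/\ measurable_fun setT q, (forall x, 0 <= q x) &
      (\int[mu]_x (q x)%:E = 1)%E].

Definition finite_entropy (q : Rd -> R) : Prop :=
  mu.-integrable setT (fun x => (q x * ln (q x))%:E).

(* Shannon entropy H(q) = - \int q log q  (convention 0 log 0 = 0, ln 0 = 0) *)
Definition entropy (q : Rd -> R) : \bar R :=
  (\int[mu]_x (- (q x * ln (q x)))%:E)%E.

Definition kl_integrand (a b : R) : \bar R :=
  if a == 0 then 0%E else if b == 0 then +oo%E else (a * ln (a / b))%:E.

Definition KL (q r : Rd -> R) : \bar R :=
  (\int[mu]_x kl_integrand (q x) (r x))%E.

Definition Zconst (ptil : Rd -> R) : \bar R := (\int[mu]_x (ptil x)%:E)%E.

Definition target (ptil : Rd -> R) (x : Rd) : R := ptil x / fine (Zconst ptil).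

Definition tilted (qi ptil : Rd -> R) (lam eta : R) (x : Rd) : R :=
  qi x `^ (lam / (1 + lam + eta)) * ptil x `^ (1 / (1 + lam + eta)).

Definition Znext (qi ptil : Rd -> R) (lam eta : R) : \bar R :=
  (\int[mu]_x (tilted qi ptil lam eta x)%:E)%E.

Definition qnext (qi ptil : Rd -> R) (lam eta : R) (x : Rd) : R :=
  tilted qi ptil lam eta x / fine (Znext qi ptil lam eta).

Definition lagrangian (ptil qi : Rd -> R) (eps_tr eps_ent lam eta : R)
    (q : Rd -> R) : \bar R :=
  (KL q (target ptil) + lam%:E * (KL q qi - eps_tr%:E)
   + eta%:E * (entropy qi - entropy q - eps_ent%:E))%E.

End Defs.

From HB Require Import structures.
From mathcomp Require Import all_boot all_order all_algebra.
From mathcomp Require Import all_classical all_reals all_analysis.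
From mathcomp Require Import measurable_realfun.
From mathcomp Require Import ring lra.
Import Order.TTheory GRing.Theory Num.Theory.
Import numFieldNormedType.Exports.
Local Open Scope classical_set_scope.
Local Open Scope ring_scope.

(* Let gkl a b = a (ln a - ln b) - a + b be the integrand of the Kullback-Leibler
   divergence between unnormalised densities.  It is nonnegative and vanishes only
   at a = b, and for two probability densities KL(q || r) = \int gkl(q, r), since
   \int (q - r) = 0.  Because ln q_{i+1} = (lam ln q_i + ln ptil) / (1 + lam + eta)
   - ln Z_{i+1}, pointwise
     gkl(q, p) + lam gkl(q, q_i) + eta q ln q
       = (1 + lam + eta) gkl(q, q_{i+1}) + (a term affine in q, p, q_i, q_{i+1}),
   and the affine term has the same integral for every density q.  Hence the
   Lagrangian is L(q) = C + (1 + lam + eta) KL(q || q_{i+1}), which is minimal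
   exactly when q = q_{i+1} almost everywhere. *)

(* The Bregman divergence of x ln x, with 0 ln 0 = 0 and a ln (a / 0) = +oo. *)
Definition gkl {R : realType} (a b : R) : \bar R :=
  if a == 0 then b%:E else if b == 0 then +oo%E
  else (a * (ln a - ln b) - a + b)%:E.

Section gkl.
Context {R : realType}.
Implicit Types a b x : R.

Lemma ln_le_subr1 x : 0 < x -> ln x <= x - 1.
Proof. by move=> x0; have := expR_ge1Dx (ln x); rewrite lnK ?posrE//; lra. Qed.

Lemma ln_lt_subr1 x : 0 < x -> x != 1 -> ln x < x - 1.
Proof.
move=> x0 x1; have := @expR_gt1Dx R (ln x).
by rewrite lnK ?posrE// ln_eq0// x1 => /(_ isT); lra.
Qed.

Lemma gkl0x b : gkl 0 b = b%:E.
Proof. by rewrite /gkl eqxx. Qed.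

Lemma gklx0 a : a != 0 -> gkl a 0 = +oo%E.
Proof. by rewrite /gkl eqxx => /negbTE ->. Qed.

Lemma gklE a b : a != 0 -> b != 0 -> gkl a b = (a * (ln a - ln b) - a + b)%:E.
Proof. by rewrite /gkl => /negbTE -> /negbTE ->. Qed.

Lemma gkl_realE a b : 0 < a -> 0 < b ->
  a * (ln a - ln b) - a + b = a * (b / a - 1 - ln (b / a)).
Proof. by move=> a0 b0; rewrite ln_div ?posrE//; field; rewrite gt_eqF. Qed.

Lemma gkl_ge0 a b : 0 <= a -> 0 <= b -> (0 <= gkl a b)%E.
Proof.
rewrite /gkl => a0 b0; case: eqP => [_|/eqP a_neq0]; first by rewrite lee_fin.
case: eqP => [//|/eqP b_neq0]; have a_gt0 : 0 < a by rewrite lt_def a_neq0.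
rewrite lee_fin gkl_realE ?lt_def ?a_neq0 ?b_neq0// mulr_ge0//.
by rewrite subr_ge0 ln_le_subr1// divr_gt0// lt_def b_neq0.
Qed.

Lemma gkl_eq0 a b : 0 <= a -> 0 <= b -> gkl a b = 0%E -> a = b.
Proof.
rewrite /gkl => a0 b0; case: eqP => [-> [] //|/eqP a_neq0].
case: eqP => [//|/eqP b_neq0 [] /eqP].
have [a_gt0 b_gt0] : 0 < a /\ 0 < b by rewrite !lt_def a_neq0 b_neq0.
rewrite gkl_realE// mulf_eq0 (negbTE a_neq0) /= subr_eq0 => /eqP ln_ba.
have [//|ab] := eqVneq a b.
have ba1 : b / a != 1.
  by apply: contra_neq ab => ba1; rewrite -[b](divfK (lt0r_neq0 a_gt0)) ba1 mul1r.
by have := ln_lt_subr1 _ (divr_gt0 b_gt0 a_gt0) ba1; rewrite -ln_ba ltxx.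
Qed.

Lemma kl_integrandE a b : 0 <= a -> 0 <= b ->
  kl_integrand a b = (gkl a b + (a - b)%:E)%E.
Proof.
rewrite /kl_integrand /gkl => a0 b0; case: eqP => [->|/eqP a_neq0].
  by rewrite -EFinD add0r subrr.
case: eqP => [//|/eqP b_neq0].
rewrite -EFinD ln_div ?posrE ?lt_def ?a_neq0 ?b_neq0//.
by congr (_%:E); ring.
Qed.
End gkl.

Section tilted_pointwise.
Variables (R : realType) (lam eta Zc Zn : R).
Hypotheses (lam_ge0 : 0 <= lam) (eta_ge0 : 0 <= eta).
Hypotheses (Zc_gt0 : 0 < Zc) (Zn_gt0 : 0 < Zn).
Local Notation c := (1 + lam + eta).

Let c_gt0 : 0 < c. Proof. by rewrite -addrA ltr_wpDr ?addr_ge0. Qed.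

Lemma gkl_tiltedE (a u v t : R) : 0 <= a -> 0 <= u -> 0 <= v ->
  t = u `^ (lam / c) * v `^ (1 / c) / Zn ->
  (gkl a (v / Zc) + lam%:E * gkl a u + (eta * (a * ln a))%:E =
   c%:E * gkl a t
   + ((ln Zc - c * ln Zn + eta) * a + v / Zc + lam * u - c * t)%:E)%E.
Proof.
move=> a0 u0 v0 tE.
have [->|a_neq0] := eqVneq a 0.
  by rewrite !gkl0x -!EFinM -!EFinD; congr (_%:E); ring.
have a_gt0 : 0 < a by rewrite lt_def a_neq0.
(* t = 0 forces v = 0, or u = 0 and lam > 0: both sides are then +oo. *)
have [t0|t_neq0] := eqVneq t 0.
  rewrite t0 gklx0// gt0_muley ?lte_fin// addye//.
  have gkl_p_ninf : gkl a (v / Zc) != -oo%E.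
    by rewrite gt_eqF// (lt_le_trans ltNy0)// gkl_ge0// divr_ge0// ltW.
  have gkl_u_ninf : (lam%:E * gkl a u)%E != -oo%E.
    by rewrite gt_eqF// (lt_le_trans ltNy0)// mule_ge0 ?gkl_ge0.
  move/eqP: t0; rewrite tE !mulf_eq0 invr_eq0 (gt_eqF Zn_gt0) orbF !powR_eq0.
  case/orP => [/andP[/eqP -> lam_neq0]|/andP[/eqP -> _]].
    have lam_gt0 : 0 < lam.
      rewrite lt_def lam_ge0 andbT.
      by apply: contraNneq lam_neq0 => ->; rewrite mul0r.
    by rewrite gklx0// gt0_muley ?lte_fin// addey// addye.
  by rewrite mul0r gklx0// addye// addye.
have [U_gt0 V_gt0] : 0 < u `^ (lam / c) /\ 0 < v `^ (1 / c).
  move: t_neq0; rewrite tE !mulf_eq0 !negb_or => /andP[/andP[U_neq0 V_neq0] _].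
  by rewrite !lt_def U_neq0 V_neq0 !powR_ge0.
have v_gt0 : 0 < v by apply: gt0_powR V_gt0; rewrite ?divr_gt0.
have lam_gkl : (lam%:E * gkl a u = (lam * (a * (ln a - ln u) - a + u))%:E)%E.
  have [->|lam_neq0] := eqVneq lam 0; first by rewrite mul0e mul0r.
  have u_neq0 : u != 0.
    apply: contraTneq U_gt0 => ->.
    by rewrite powR0 ?ltxx// mulf_eq0 negb_or lam_neq0 invr_eq0 gt_eqF.
  by rewrite gklE// -EFinM.
have ln_t : ln t = lam / c * ln u + 1 / c * ln v - ln Zn.
  by rewrite tE ln_div ?lnM ?ln_powR ?posrE ?mulr_gt0 ?divr_gt0.
rewrite lam_gkl [gkl a t]gklE// gklE ?gt_eqF ?divr_gt0//.
rewrite ln_t ln_div ?posrE// -!EFinM -!EFinD; congr (_%:E).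
by field; rewrite !gt_eqF.
Qed.
End tilted_pointwise.

Section integration.
Context d (T : measurableType d) (R : realType) (mu : {measure set T -> \bar R}).
Local Open Scope ereal_scope.

Lemma measurable_gkl (q r : T -> R) :
  measurable_fun setT q -> measurable_fun setT r ->
  measurable_fun setT (fun t => gkl (q t) (r t)).
Proof.
move=> mq mr; apply: measurable_fun_ifT.
- exact: measurable_fun_eqr.
- exact/measurable_EFinP.
apply: measurable_fun_ifT.
- exact: measurable_fun_eqr.
- exact: measurable_cst.
apply/measurable_EFinP; apply: measurable_funD => //; apply: measurable_funB => //.
by apply: measurable_funM => //; apply: measurable_funB;
  apply: (measurableT_comp (@measurable_ln R)).
Qed.

Lemma ge0_integrable (f : T -> R) : measurable_fun setT f ->
  (forall x, 0 <= f x)%R -> \int[mu]_x (f x)%:E < +oo ->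
  mu.-integrable setT (EFin \o f).
Proof.
move=> mf f0 fint; apply/integrableP; split; first exact/measurable_EFinP.
by under eq_integral do rewrite gee0_abs ?lee_fin//.
Qed.

Lemma ge0_integralD_integrable (F : T -> \bar R) (h : T -> R) :
  (forall x, 0 <= F x) -> measurable_fun setT F ->
  mu.-integrable setT (EFin \o h) ->
  \int[mu]_x (F x + (h x)%:E) = \int[mu]_x F x + \int[mu]_x (h x)%:E.
Proof.
move=> F0 mF ih.
have mh : measurable_fun setT (EFin \o h) by exact: measurable_int ih.
have [Ffin|] := ltP (\int[mu]_x F x) +oo.
  have iF : mu.-integrable setT F.
    by apply/integrableP; split => //; under eq_integral do rewrite gee0_abs//.
  exact: integralD.
(* Otherwise F <= (F + h)^+ + h^- forces \int (F + h)^+ = +oo, whereas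
   (F + h)^- <= h^- has a finite integral. *)
rewrite leye_eq => /eqP Finf; rewrite Finf addye; last first.
  by case/fin_numP: (integrable_fin_num measurableT ih).
pose G x := F x + (h x)%:E.
have mG : measurable_fun setT G by exact: emeasurable_funD.
have hneg_fin := integral_funeneg_lt_pinfty measurableT ih.
have Gneg_fin : \int[mu]_x G^\- x < +oo.
  apply: le_lt_trans hneg_fin; apply: ge0_le_integral => //.
  - exact: measurable_funeneg.
  - exact: measurable_funeneg.
  move=> x _; rewrite !funenegE le_max2// leeN2 /G leeDr//.
have F_le : \int[mu]_x F x <= \int[mu]_x G^\+ x + \int[mu]_x (EFin \o h)^\- x.
  rewrite -ge0_integralD//; [|exact: measurable_funepos|exact: measurable_funeneg].
  apply: ge0_le_integral => //.
    by apply: emeasurable_funD; [exact: measurable_funepos|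
                                exact: measurable_funeneg].
  move=> x _; rewrite funeposE funenegE.
  rewrite -[leLHS](@addeK _ (h x)%:E (F x))// -/(G x).
  by apply: leeD; rewrite le_max lexx.
have Gpos_inf : \int[mu]_x G^\+ x = +oo.
  apply/eqP; rewrite eq_le leey /= leNgt; apply/negP => Gpos_fin.
  by have := lte_add_pinfty Gpos_fin hneg_fin; rewrite ltNge -Finf F_le.
by rewrite integralE Gpos_inf addye// eqe_oppLR /= lt_eqF.
Qed.

Section lincomb.
Variables (a b : R) (f g : T -> R).
Hypotheses (intf : mu.-integrable setT (EFin \o f))
  (intg : mu.-integrable setT (EFin \o g)).

Let intZf : mu.-integrable setT (fun x => a%:E * (f x)%:E).
Proof. exact: integrableZl. Qed.

Let intZg : mu.-integrable setT (fun x => b%:E * (g x)%:E).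
Proof. exact: integrableZl. Qed.

Let lincombE : (fun x => (a * f x + b * g x)%:E) =
  (fun x => a%:E * (f x)%:E + b%:E * (g x)%:E).
Proof. by apply/funext => x; rewrite EFinD !EFinM. Qed.

Lemma integrable_lincomb :
  mu.-integrable setT (EFin \o (fun x => a * f x + b * g x)%R).
Proof. by rewrite /comp lincombE; exact: integrableD. Qed.

Lemma integral_lincomb : \int[mu]_x (a * f x + b * g x)%:E =
  a%:E * \int[mu]_x (f x)%:E + b%:E * \int[mu]_x (g x)%:E.
Proof. by rewrite lincombE integralD// !integralZl. Qed.

End lincomb.

End integration.

Section densities.
Context {R : realType} {d : nat} {mu : {measure set d.-tuple R -> \bar R}}.
Implicit Types q r f : d.-tuple R -> R.
Local Open Scope ereal_scope.

Lemma density_integrable q : is_density mu q -> mu.-integrable setT (EFin \o q).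
Proof. by case=> mq q0 q1; apply: ge0_integrable; rewrite ?q1 ?ltry. Qed.

Lemma KL_gkl q r : is_density mu q -> is_density mu r ->
  KL mu q r = \int[mu]_x gkl (q x) (r x).
Proof.
move=> dq dr; have [mq q0 q1] := dq; have [mr r0 r1] := dr.
have [iq ir] := (density_integrable q dq, density_integrable r dr).
rewrite /KL (eq_integral (fun x =>
  gkl (q x) (r x) + (1 * q x + (-1) * r x)%:E)); last first.
  by move=> x _; rewrite kl_integrandE// mul1r mulN1r.
rewrite ge0_integralD_integrable ?integrable_lincomb//; last 2 first.
- by move=> x; exact: gkl_ge0.
- exact: measurable_gkl.
by rewrite integral_lincomb// q1 r1 !mule1 -EFinD addrN adde0.
Qed.

Lemma KLxx q : KL mu q q = 0.
Proof.
rewrite /KL (eq_integral (fun=> 0)) ?integral0// => x _.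
by rewrite /kl_integrand; case: eqP => // /eqP qx0; rewrite divff// ln1 mulr0.
Qed.

Lemma KL_ge0 q r : is_density mu q -> is_density mu r -> 0 <= KL mu q r.
Proof.
move=> dq dr; have [_ q0 _] := dq; have [_ r0 _] := dr.
by rewrite KL_gkl// integral_ge0// => x _; exact: gkl_ge0.
Qed.

Lemma KL_eq0 q r : is_density mu q -> is_density mu r ->
  KL mu q r = 0 -> {ae mu, forall x, q x = r x}.
Proof.
move=> dq dr; have [mq q0 _] := dq; have [mr r0 _] := dr.
have mG : measurable_fun setT (fun x => gkl (q x) (r x)) by exact: measurable_gkl.
rewrite KL_gkl// => G0; have := (ae_eq_integral_abs mu measurableT mG).1.
under eq_integral do rewrite gee0_abs ?gkl_ge0//.
by move=> /(_ G0); apply: filterS => x /(_ I); exact: gkl_eq0.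
Qed.

Lemma normalized_density f : measurable_fun setT f -> (forall x, 0 <= f x)%R ->
  0 < \int[mu]_x (f x)%:E < +oo ->
  is_density mu (fun x => f x / fine (\int[mu]_x (f x)%:E))%R.
Proof.
move=> mf f0 /andP[Z_gt0 Z_fin].
have Z_fin_num : \int[mu]_x (f x)%:E \is a fin_num by rewrite ge0_fin_numE ?ltW.
have Z_pos : (0 < fine (\int[mu]_x (f x)%:E))%R by rewrite fine_gt0// Z_gt0 Z_fin.
split.
- by apply: measurable_funM => //; exact: measurable_cst.
- by move=> x; rewrite divr_ge0// ltW.
under eq_integral do rewrite EFinM.
rewrite ge0_integralZr//; last 3 first.
- exact/measurable_EFinP.
- by move=> x _; rewrite lee_fin.
- by rewrite lee_fin invr_ge0 ltW.
by rewrite -[X in X * _]fineK// -EFinM divff// gt_eqF.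
Qed.

Lemma entropyE q : finite_entropy mu q ->
  entropy mu q = - \int[mu]_x (q x * ln (q x))%:E.
Proof.
move=> fq; rewrite /entropy -integralN; last exact: integrable_add_def.
by apply: eq_integral => x _; rewrite EFinN.
Qed.

End densities.

Section lagrangian.
Context {R : realType} {d : nat} {mu : {measure set d.-tuple R -> \bar R}}.
Context {ptil qi : d.-tuple R -> R} {lam eta : R}.
Variables eps_tr eps_ent : R.
Hypotheses (mptil : measurable_fun setT ptil) (ptil_ge0 : forall x, 0 <= ptil x).
Hypothesis Zconst_fin : (0 < Zconst mu ptil < +oo)%E.
Hypotheses (qi_density : is_density mu qi) (qi_entropy : finite_entropy mu qi).
Hypotheses (lam_ge0 : 0 <= lam) (eta_ge0 : 0 <= eta).
Hypothesis Znext_fin : (0 < Znext mu qi ptil lam eta < +oo)%E.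

Local Notation c := (1 + lam + eta).
Local Notation p := (target mu ptil).
Local Notation t := (qnext mu qi ptil lam eta).
Local Notation L := (lagrangian mu ptil qi eps_tr eps_ent lam eta).

Lemma target_density : is_density mu p.
Proof. exact: normalized_density. Qed.

Lemma qnext_density : is_density mu t.
Proof.
have [mqi _ _] := qi_density.
apply: normalized_density => // [|x]; last by rewrite mulr_ge0 ?powR_ge0.
rewrite /tilted; apply: measurable_funM;
  exact: (measurableT_comp (@measurable_powR R _)).
Qed.

Let Zc := fine (Zconst mu ptil).
Let Zn := fine (Znext mu qi ptil lam eta).

Let Zc_gt0 : 0 < Zc.
Proof. by case/andP: Zconst_fin => Z0 Zoo; rewrite fine_gt0// Z0 Zoo. Qed.

Let Zn_gt0 : 0 < Zn.
Proof. by case/andP: Znext_fin => Z0 Zoo; rewrite fine_gt0// Z0 Zoo. Qed.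

Let c_gt0 : 0 < c. Proof. by rewrite -addrA ltr_wpDr ?addr_ge0. Qed.

Lemma integral_lagrangian_integrand q : is_density mu q ->
  (\int[mu]_x (gkl (q x) (p x) + lam%:E * gkl (q x) (qi x)
                + (eta * (q x * ln (q x)))%:E) =
   c%:E * \int[mu]_x gkl (q x) (t x) + (ln Zc - c * ln Zn)%:E)%E.
Proof.
move=> dq; have [mq q_ge0 q1] := dq; have [_ qi_ge0 qi1] := qi_density.
have [_ _ p1] := target_density; have [mt t_ge0 t1] := qnext_density.
have iq := density_integrable q dq; have iqi := density_integrable qi qi_density.
have ip := density_integrable p target_density.
have it := density_integrable t qnext_density.
set K := ln Zc - c * ln Zn.
(* The affine term of gkl_tiltedE, shaped for integral_lincomb. *)
pose h x := 1 * ((K + eta) * q x + 1 * p x) + 1 * (lam * qi x + (- c) * t x).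
have ih : mu.-integrable setT (EFin \o h) by do 2?apply: integrable_lincomb.
have int_h : (\int[mu]_x (h x)%:E = K%:E)%E.
  rewrite !integral_lincomb ?integrable_lincomb// q1 qi1 p1 t1 !mule1.
  rewrite -!EFinM -!EFinD.
  by congr (_%:E); ring.
rewrite (eq_integral (fun x => c%:E * gkl (q x) (t x) + (h x)%:E))%E; last first.
  by move=> x _; rewrite /h !mul1r mulNr addrA; exact: gkl_tiltedE.
rewrite ge0_integralD_integrable ?int_h//.
- rewrite ge0_integralZl ?lee_fin ?ltW//; first exact: measurable_gkl.
  by move=> x _; exact: gkl_ge0.
- by move=> x; apply: mule_ge0; [rewrite lee_fin ltW|exact: gkl_ge0].
- by apply: measurable_funeM; exact: measurable_gkl.
Qed.

Lemma integral_gkl_lagrangian q : is_density mu q -> finite_entropy mu q ->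
  (\int[mu]_x gkl (q x) (p x) + lam%:E * \int[mu]_x gkl (q x) (qi x)
   + eta%:E * \int[mu]_x (q x * ln (q x))%:E =
   c%:E * \int[mu]_x gkl (q x) (t x) + (ln Zc - c * ln Zn)%:E)%E.
Proof.
move=> dq q_entropy; rewrite -integral_lagrangian_integrand//.
have [mq q_ge0 _] := dq; have [mqi qi_ge0 _] := qi_density.
have [mp p_ge0 _] := target_density.
rewrite ge0_integralD_integrable; last 3 first.
- by move=> x; rewrite adde_ge0 ?mule_ge0 ?gkl_ge0.
- by apply: emeasurable_funD; [|apply: measurable_funeM]; exact: measurable_gkl.
- by rewrite /comp; under eq_fun do rewrite EFinM; exact: integrableZl.
rewrite ge0_integralD//; last 4 first.
- by move=> x _; exact: gkl_ge0.
- exact: measurable_gkl.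
- by move=> x _; rewrite mule_ge0 ?gkl_ge0.
- by apply: measurable_funeM; exact: measurable_gkl.
rewrite ge0_integralZl//; last 2 first.
- exact: measurable_gkl.
- by move=> x _; exact: gkl_ge0.
by congr (_ + _)%E; rewrite -integralZl//; apply: eq_integral => x _; rewrite EFinM.
Qed.

Lemma lagrangian_KL_qnext : exists C : R, forall q,
  is_density mu q -> finite_entropy mu q -> L q = (C%:E + c%:E * KL mu q t)%E.
Proof.
exists (ln Zc - c * ln Zn - lam * eps_tr + eta * (fine (entropy mu qi) - eps_ent)).
move=> r dr r_entropy; have := integral_gkl_lagrangian r dr r_entropy.
have [dp dt] := (target_density, qnext_density).
rewrite /lagrangian !KL_gkl// (entropyE r r_entropy).
have [er ->] : exists er, (\int[mu]_x (r x * ln (r x))%:E = er%:E)%E.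
  exists (fine (\int[mu]_x (r x * ln (r x))%:E)%E).
  by rewrite fineK// integrable_fin_num.
have [hqi ->] : exists h, entropy mu qi = h%:E.
  exists (fine (entropy mu qi)).
  by rewrite fineK// entropyE// fin_numN integrable_fin_num.
(* Generalised, so that the rewrites below cannot unfold these integrals. *)
move: (\int[mu]_x gkl (r x) (p x))%E (\int[mu]_x gkl (r x) (qi x))%E
  (\int[mu]_x gkl (r x) (t x))%E => Gp Gi Gt /=.
rewrite -!EFinD muleDr ?fin_num_adde_defl// -!EFinM => combineE.
rewrite -!addeA -EFinD.
have -> : lam * - eps_tr + eta * (hqi - - er - eps_ent) =
          eta * er + (eta * (hqi - eps_ent) - lam * eps_tr) by ring.
rewrite EFinD !addeA combineE -addeA -EFinD addeC; congr (_%:E + _); ring.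
Qed.

End lagrangian.

Theorem proposition3 (R : realType) (d : nat)
    (mu : {measure set (d.-tuple R) -> \bar R})
    (ptil qi : d.-tuple R -> R) (eps_tr eps_ent lam eta : R) :
  is_lebesgue_measure mu ->
  tuple_continuous ptil -> measurable_fun setT ptil ->
  (forall x, 0 <= ptil x) ->
  (0 < Zconst mu ptil < +oo)%E ->
  0 < eps_tr -> 0 < eps_ent ->
  is_density mu qi -> finite_entropy mu qi ->
  0 <= lam -> 0 <= eta ->
  (0 < Znext mu qi ptil lam eta < +oo)%E ->
  finite_entropy mu (qnext mu qi ptil lam eta) ->
  [/\ is_density mu (qnext mu qi ptil lam eta),
      (forall q, is_density mu q -> finite_entropy mu q ->
        (lagrangian mu ptil qi eps_tr eps_ent lam eta (qnext mu qi ptil lam eta)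
         <= lagrangian mu ptil qi eps_tr eps_ent lam eta q)%E) &
      (forall q, is_density mu q -> finite_entropy mu q ->
        (lagrangian mu ptil qi eps_tr eps_ent lam eta q
         <= lagrangian mu ptil qi eps_tr eps_ent lam eta (qnext mu qi ptil lam eta))%E ->
        {ae mu, forall x, q x = qnext mu qi ptil lam eta x})].
Proof.
(* Neither the Lebesgue property of mu, the continuity of ptil nor the radii
   eps_tr, eps_ent play any role. *)
move=> _ _ mptil ptil_ge0 Z_fin _ _ dqi qi_entropy lam_ge0 eta_ge0 Znext_fin
  t_entropy.
have dt := qnext_density mptil dqi Znext_fin.
have [C LE] := lagrangian_KL_qnext eps_tr eps_ent mptil ptil_ge0 Z_fin dqi
  qi_entropy lam_ge0 eta_ge0 Znext_fin.
have c_gt0 : 0 < 1 + lam + eta by rewrite -addrA ltr_wpDr ?addr_ge0.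
have Lt : lagrangian mu ptil qi eps_tr eps_ent lam eta (qnext mu qi ptil lam eta)
    = C%:E by rewrite LE// KLxx mule0 adde0.
split => // q dq q_entropy; rewrite Lt LE//.
  by apply: leeDl; apply: mule_ge0; [rewrite lee_fin ltW|exact: KL_ge0].
rewrite -[leRHS]adde0 leeD2lE// => cKL_le0; apply: KL_eq0 => //.
apply/eqP; rewrite eq_le KL_ge0// andbT.
by rewrite -(@lee_pmul2l _ (1 + lam + eta)%:E) ?lte_fin// mule0.
Qed.
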